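(* Let $M$ be a model with borders and $U\subseteq M$ an up-set. The following are equivalent: (1) there is a $(\wedge,\to)$-formula $\varphi$ with $v(\varphi)=U$; (2) for all $x\in M$: if for every $z\in M^s$ with $z\ge x$ there exists $y\in U\cap M^s$ bisimilar to $z$ in $M^s$, then $x\in U$; (3) for all $x\in M$: (a) if all separated points $z\ge x$ are in $U$, then $x\in U$; and (b) if $x\in M^s$ and there exists $x'\in U\cap M^s$ bisimilar to $x$ in $M^s$, then $x\in U$.
   Context: Fix $n\ge1$ and variables $p_1,\dots,p_n$. A model is $(M,\le,c)$, $(M,\le)$ a poset, $c:M\to\{0,1\}^n$ order-preserving (componentwise order), with intuitionistic Kripke semantics ($x\models p_i$ iff $c(x)_i=1$; $x\models\varphi\to\psi$ iff every $y\ge x$ satisfying $\varphi$ satisfies $\psi$). $v(\varphi)$ is the set of points of $M$ satisfying $\varphi$. A $(\wedge,\to)$-formula uses only $\wedge,\to$. A point $x$ is a $q$-border point if $x\not\models q$ and all $y>x$ satisfy $q$; separated if it is a $q$-border point for some variable $q$. $M^s$ is the set of separated points with restricted order and colouring, a model in its own right, all of whose chains have at most $n$ elements. $M$ has borders if for every variable $p$ and $x$ with $x\not\models p$ there is a $p$-border point $y\ge x$. Two points of $M^s$ are bisimilar in $M^s$ if they are related by an intuitionistic bisimulation of the model $M^s$ (colour-preserving, with forth and back conditions for $\le$); equivalently, since $M^s$ has finite depth, they have the same image under the unique p-morphism from $M^s$ to the $n$-universal model $U(n)$. *)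

From mathcomp Require Import all_boot.
Set Implicit Arguments. Unset Strict Implicit. Unset Printing Implicit Defensive.

(* An intuitionistic Kripke model over variables p_0..p_{n-1}:
   a poset (M, le) with an order-preserving colouring c : M -> {0,1}^n. *)
Record model (n : nat) := Model {
  carrier :> Type;
  le : carrier -> carrier -> Prop;
  le_refl : forall x, le x x;
  le_antisym : forall x y, le x y -> le y x -> x = y;
  le_trans : forall x y z, le x y -> le y z -> le x z;
  col : carrier -> 'I_n -> bool;
  col_mono : forall x y (i : 'I_n), le x y -> col x i -> col y i
}.

Definition lt n (M : model n) (x y : M) : Prop := le x y /\ x <> y.

Inductive aiform (n : nat) : Type :=
| AVar of 'I_n
| AAnd of aiform n & aiform n
| AImp of aiform n & aiform n.

Fixpoint sat n (M : model n) (x : M) (phi : aiform n) : Prop :=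
  match phi with
  | AVar i => col x i = true
  | AAnd a b => sat x a /\ sat x b
  | AImp a b => forall y : M, le x y -> sat y a -> sat y b
  end.

Definition upset n (M : model n) (U : M -> Prop) : Prop :=
  forall x y : M, le x y -> U x -> U y.

Definition border n (M : model n) (q : 'I_n) (x : M) : Prop :=
  col x q = false /\ forall y : M, lt x y -> col y q = true.

Definition separated n (M : model n) (x : M) : Prop :=
  exists q, border q x.

Definition has_borders n (M : model n) : Prop :=
  forall (p : 'I_n) (x : M), col x p = false ->
    exists y : M, le x y /\ border p y.

(* intuitionistic bisimulation of the model M^s (separated points,
   restricted order and colouring) *)
Definition sbisimulation n (M : model n) (R : M -> M -> Prop) : Prop :=
  forall x x' : M, R x x' ->
    [/\ separated x, separated x',
        (forall i, col x i = col x' i),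
        (forall y : M, separated y -> le x y ->
           exists2 y' : M, separated y' /\ le x' y' & R y y') &
        (forall y' : M, separated y' -> le x' y' ->
           exists2 y : M, separated y /\ le x y & R y y')].

Definition sbisimilar n (M : model n) (x x' : M) : Prop :=
  exists R, sbisimulation R /\ R x x'.

(* Every separated point z has a characteristic (/\,->)-formula, refuted exactly at the
   points that see a point bisimilar to z in M^s.  It is built by induction on the number
   of variables false at z, which is at most n since chains of separated points strictly
   gain variables; at each stage finitely many formulas suffice.  Since M has borders, a
   formula holds at x iff it holds at all separated points above x, and formulas are
   invariant under bisimulation of M^s, which gives (1) -> (3).  Conversely, under (3) the
   conjunction of those characteristic formulas that hold on all separated points of U
   defines U. *)
From mathcomp Require Import all_boot.
From Stdlib Require Import Classical.
From Stdlib Require List.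
Set Implicit Arguments. Unset Strict Implicit. Unset Printing Implicit Defensive.

Section Semantics.
Variables (n : nat) (M : model n).

Lemma le_eq_or_lt (x y : M) : le x y -> x = y \/ lt x y.
Proof. by move=> hxy; case: (classic (x = y)) => [|nxy]; [left | right]. Qed.

Lemma sat_monotone (phi : aiform n) (x y : M) : le x y -> sat x phi -> sat y phi.
Proof.
elim: phi x y => [i|a IHa b IHb|a IHa b IHb] x y hxy /=.
- exact: col_mono.
- by case=> ha hb; split; [exact: IHa hxy ha | exact: IHb hxy hb].
- by move=> h v hyv; apply: h; exact: le_trans hxy hyv.
Qed.

Lemma unsat_imp (a b : aiform n) (x : M) :
  ~ sat x (AImp a b) -> exists y, [/\ le x y, sat y a & ~ sat y b].
Proof.
move=> h; apply: NNPP => hne; apply: h => y hxy hya.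
by apply: NNPP => hyb; apply: hne; exists y.
Qed.

Hypothesis hb : has_borders M.

Lemma refuted_at_separated (phi : aiform n) (x : M) :
  ~ sat x phi -> exists w, [/\ le x w, separated w & ~ sat w phi].
Proof.
elim: phi x => [i|a IHa b IHb|a IHa b IHb] x /= hx.
- move/negP/negbTE: hx => hxi; have [y [hxy [hyi hy]]] := hb hxi.
  by exists y; split=> //; [exists i | rewrite hyi].
- have [ha|ha] := classic (sat x a).
  + have [|w [hxw sw hwb]] := IHb x; first by move=> hxb; apply: hx.
    by exists w; split=> // -[].
  + have [w [hxw sw hwa]] := IHa x ha.
    by exists w; split=> // -[].
- have [y [hxy hya hyb]] := unsat_imp hx.
  have [w [hyw sw hwb]] := IHb y hyb.
  exists w; split=> //; first exact: le_trans hxy hyw.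
  by move=> h; apply: hwb; apply: h (le_refl w) (sat_monotone hyw hya).
Qed.

Lemma sat_of_separated (phi : aiform n) (x : M) :
  (forall w, separated w -> le x w -> sat w phi) -> sat x phi.
Proof.
move=> h; apply: NNPP => /refuted_at_separated [w [hxw sw hwphi]].
exact: hwphi (h w sw hxw).
Qed.

End Semantics.

Section Bisimulation.
Variables (n : nat) (M : model n).

Lemma sbisimilar_sbisimulation : sbisimulation (@sbisimilar n M).
Proof.
move=> x x' [R [hR hxx']]; have [sx sx' hc hf hbk] := hR x x' hxx'.
split=> // [y sy hxy|y' sy' hxy'].
- by have [y' hy' hyy'] := hf y sy hxy; exists y' => //; exists R.
- by have [y hy hyy'] := hbk y' sy' hxy'; exists y => //; exists R.
Qed.

Lemma sbisimilar_sym (x y : M) : sbisimilar x y -> sbisimilar y x.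
Proof.
case=> R [hR hxy]; exists (fun a b => R b a); split=> // a b hab.
by have [sb sa hc hf hbk] := hR b a hab; split=> // i; rewrite hc.
Qed.

Lemma sbisimilar_refl (x : M) : separated x -> sbisimilar x x.
Proof.
move=> sx; exists (fun a b => a = b /\ separated a); split=> //.
by move=> a b [<- sa]; split=> // y sy hay; exists y.
Qed.

Lemma sbisimilar_separated (x y : M) : sbisimilar x y -> separated x /\ separated y.
Proof. by case=> R [hR hxy]; case: (hR x y hxy). Qed.

Lemma sbisimilar_intro (x u : M) :
  separated x -> separated u -> (forall i, col x i = col u i) ->
  (forall y, separated y -> lt x y ->
     exists2 y', separated y' /\ le u y' & sbisimilar y y') ->
  (forall y', separated y' -> lt u y' ->
     exists2 y, separated y /\ le x y & sbisimilar y y') ->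
  sbisimilar x u.
Proof.
move=> sx su hcol forth back.
exists (fun a b => (a = x /\ b = u) \/ sbisimilar a b); split; last by left.
move=> a b [[-> ->]|hab]; last first.
  have [sa sb hc hf hbk] := sbisimilar_sbisimulation hab.
  split=> // y sy hy; [case: (hf y sy hy) | case: (hbk y sy hy)] => y' hy' hyy';
    by exists y' => //; right.
split=> // [y sy hxy|y' sy' huy'].
- case: (le_eq_or_lt hxy) => [<-|lxy]; first by exists u; [split=> //; exact: le_refl | left].
  by have [y' hy' hyy'] := forth y sy lxy; exists y' => //; right.
- case: (le_eq_or_lt huy') => [<-|luy]; first by exists x; [split=> //; exact: le_refl | left].
  by have [y hy hyy'] := back y' sy' luy; exists y => //; right.
Qed.

Lemma sbisimulation_sat (hb : has_borders M) (R : M -> M -> Prop) (phi : aiform n) :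
  sbisimulation R -> forall x x' : M, R x x' -> (sat x phi <-> sat x' phi).
Proof.
move=> hR; elim: phi => [i|a IHa b IHb|a IHa b IHb] x x' hxx' /=.
- by case: (hR x x' hxx') => _ _ hc _ _; rewrite hc.
- by rewrite (IHa _ _ hxx') (IHb _ _ hxx').
- have [_ _ _ hf hbk] := hR x x' hxx'.
  split=> h y hxy hya; apply: NNPP => /(refuted_at_separated hb) [w [hyw sw hwb]].
  + have [v [sv hxv] hvw] := hbk w sw (le_trans hxy hyw).
    apply: hwb; apply/(IHb v w hvw); apply: h hxv _.
    by apply/(IHa _ _ hvw); exact: sat_monotone hyw hya.
  + have [v [sv hxv] hwv] := hf w sw (le_trans hxy hyw).
    apply: hwb; apply/(IHb w v hwv); apply: h hxv _.
    by apply/(IHa _ _ hwv); exact: sat_monotone hyw hya.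
Qed.

End Bisimulation.

Definition ncol n (M : model n) (x : M) : nat := #|[set i | col x i]|.

Lemma ncol_separated n (M : model n) (x : M) : separated x -> ncol x < n.
Proof.
case=> q [hq _]; rewrite -[n in _ < n]card_ord -cardsT; apply: proper_card.
by apply/properP; split; [exact: subsetT | exists q; rewrite ?inE ?hq].
Qed.

Lemma ncol_lt n (M : model n) (x y : M) : separated x -> lt x y -> ncol x < ncol y.
Proof.
case=> q [hq hqy] lxy; apply: proper_card; apply/properP; split.
- by apply/subsetP=> i; rewrite !inE; exact: col_mono lxy.1.
- by exists q; rewrite !inE ?hq ?(hqy y lxy).
Qed.

Lemma In_of_mem (T : eqType) (x : T) (s : seq T) : x \in s -> List.In x s.
Proof.
elim: s => [|y s IH] //=; rewrite in_cons => /orP [/eqP ->|/IH hs]; by [left | right].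
Qed.

Fixpoint sublists T (s : list T) : list (list T) :=
  match s with
  | nil => [:: nil]
  | x :: s' => List.app (List.map (cons x) (sublists s')) (sublists s')
  end.

Lemma sublists_select T (s : list T) (P : T -> Prop) :
  exists2 t, List.In t (sublists s) & forall x, List.In x t <-> List.In x s /\ P x.
Proof.
elim: s => [|x s [t ht htP]] /=; first by exists nil; [left | move=> x; split=> //= -[]].
have [px|npx] := classic (P x).
- exists (x :: t); first by apply/List.in_app_iff; left; exact: List.in_map.
  move=> y /=; rewrite htP.
  by split=> [[<-|[ys py]]|[[<-|ys] py]]; by [split; [left|] | split; [right|] | left | right].
- exists t; first by apply/List.in_app_iff; right.
  move=> y; rewrite htP; split; first by case=> ys py; split; first right.
  by case=> -[<-|ys] py.
Qed.

Section Conjunction.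
Variables (n : nat) (i0 : 'I_n).

(* [n >= 1] is needed only to have some variable from which to build a true formula. *)
Definition top : aiform n := AImp (AVar i0) (AVar i0).

Definition big_and (l : list (aiform n)) : aiform n := foldr (@AAnd n) top l.

Lemma sat_top (M : model n) (x : M) : sat x top.
Proof. by []. Qed.

Lemma sat_big_and (M : model n) (x : M) (l : list (aiform n)) :
  sat x (big_and l) <-> forall g, List.In g l -> sat x g.
Proof.
elim: l => [|g l IH] /=; first by [].
rewrite IH; split=> [[hg hl] g' [<-|hg']|h] //; first exact: hl.
by split=> [|g' hg']; apply: h; [left | right].
Qed.

Lemma sat_big_and_enum (M : model n) (x : M) (f : 'I_n -> aiform n) :
  sat x (big_and (List.map f (enum 'I_n))) <-> forall i, sat x (f i).
Proof.
rewrite sat_big_and; split=> [h i|h g /List.in_map_iff [i [<- _]]] //.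
by apply: h; apply: List.in_map; apply: In_of_mem; rewrite mem_enum.
Qed.

End Conjunction.

Section CharacteristicFormula.
Variables (n : nat) (i0 : 'I_n).
Implicit Types (c : {ffun 'I_n -> bool}) (L S : list (aiform n)).

(* Intended use: [c] is the colouring of a separated point [z], [S1] lists the formulas
   refuted at [z] and [S2] those true at all separated strict successors of [z].  An
   [r]-border point satisfying [border_cond c S1 S2 r] is then bisimilar to [z], and
   [char_form c S1 S2] fails exactly below such border points. *)
Definition colour_form c (r : 'I_n) : aiform n :=
  big_and i0 (List.map (fun i => if c i then AVar i else AImp (AVar i) (AVar r)) (enum 'I_n)).

Definition border_cond c (S1 S2 : list (aiform n)) (r : 'I_n) : aiform n :=
  AAnd (colour_form c r)
    (AAnd (big_and i0 (List.map (fun g => AImp g (AVar r)) S1)) (AImp (AVar r) (big_and i0 S2))).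

Definition char_form c (S1 S2 : list (aiform n)) : aiform n :=
  big_and i0 (List.map (fun r => if c r then top i0 else AImp (border_cond c S1 S2 r) (AVar r))
                (enum 'I_n)).

Definition char_forms L : list (aiform n) :=
  List.flat_map (fun c => List.flat_map (fun S1 => List.map (char_form c S1) (sublists L))
                                        (sublists L))
    (enum {ffun 'I_n -> bool}).

Lemma in_char_forms c L (S1 S2 : list (aiform n)) :
  List.In S1 (sublists L) -> List.In S2 (sublists L) ->
  List.In (char_form c S1 S2) (char_forms L).
Proof.
move=> hS1 hS2; apply/List.in_flat_map; exists c.
split; first by apply: In_of_mem; rewrite mem_enum.
by apply/List.in_flat_map; exists S1; split=> //; exact: List.in_map.
Qed.

Definition characteristic (M : model n) (g : aiform n) (z : M) : Prop :=
  ~ sat z g /\ forall w : M, ~ sat w g -> exists2 w', le w w' & sbisimilar z w'.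

Variables (M : model n) (hb : has_borders M).

Lemma char_form_refuted c (S1 S2 : list (aiform n)) (w : M) :
  ~ sat w (char_form c S1 S2) ->
  exists r u, [/\ le w u, border r u & sat u (border_cond c S1 S2 r)].
Proof.
move=> hw.
have [r hr] : exists r, ~ sat w (if c r then top i0 else AImp (border_cond c S1 S2 r) (AVar r)).
  by apply: not_all_ex_not => h; apply: hw; apply/sat_big_and_enum.
case: (c r) hr => hr; first by case: hr; exact: sat_top.
have [y [hwy hya /negP/negbTE hyr]] := unsat_imp hr.
have [u [hyu hu]] := hb hyr.
by exists r, u; split=> //; [exact: le_trans hwy hyu | exact: sat_monotone hyu hya].
Qed.

Variables (z : M) (L S1 S2 : list (aiform n)).
Hypothesis S1_spec : forall g, List.In g S1 <-> List.In g L /\ ~ sat z g.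
Hypothesis S2_spec : forall g,
  List.In g S2 <-> List.In g L /\ forall y, separated y -> lt z y -> sat y g.
Let c := [ffun i => col z i].

Lemma char_form_unsat : separated z -> ~ sat z (char_form c S1 S2).
Proof.
case=> q [hzq hq] /sat_big_and_enum /(_ q); rewrite /c ffunE hzq /= => h.
have above v : le z v -> v <> z -> col v q.
  by move=> hzv nv; apply: hq; split=> // ezv; apply: nv; rewrite ezv.
suff: col z q by rewrite hzq.
apply: h (le_refl z) _; split; [|split].
- apply/sat_big_and_enum => i; rewrite ffunE; case hzi: (col z i) => //= v hzv hvi.
  by apply: above hzv _ => e; move: hvi; rewrite e hzi.
- apply/sat_big_and => _ /List.in_map_iff [g [<- /S1_spec [_ hg]]] v hzv hvg.
  by apply: above hzv _ => e; apply: hg; rewrite -e.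
- move=> v hzv hvq; have nv : v <> z by move=> e; move: hvq; rewrite e hzq.
  apply/sat_big_and => g /S2_spec [_ hg]; apply: (sat_of_separated hb) => w sw hvw.
  apply: hg sw _; split; first exact: le_trans hzv hvw.
  by move=> ezw; apply: nv; apply: (le_antisym _ hzv); rewrite ezw.
Qed.

Hypothesis sz : separated z.
Hypothesis char_L : forall y : M, separated y -> ncol z < ncol y ->
  exists2 g, List.In g L & characteristic g y.

Section BorderPoint.
Variables (r : 'I_n) (u : M).
Hypotheses (hur : border r u) (hu : sat u (border_cond c S1 S2 r)).

Lemma border_cond_col i : col z i = col u i.
Proof.
case: hu => /sat_big_and_enum /(_ i); rewrite ffunE.
case: (col z i) => /= [->|h _] //; case hui: (col u i) => //.
by move: (h u (le_refl u) hui); rewrite hur.1.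
Qed.

Lemma border_cond_forth y : separated y -> lt z y ->
  exists2 y', separated y' /\ le u y' & sbisimilar y y'.
Proof.
move=> sy lzy; have [g gL [hyg hg]] := char_L sy (ncol_lt sz lzy).
have gS1 : List.In g S1 by apply/S1_spec; split=> // hzg; apply: hyg; exact: sat_monotone lzy.1 hzg.
have hug : ~ sat u g.
  case: hu => _ [/sat_big_and /(_ _ (List.in_map _ _ _ gS1)) h _] hug.
  by move: (h u (le_refl u) hug); rewrite hur.1.
have [w' huw' hyw'] := hg u hug.
by exists w' => //; split=> //; exact: (sbisimilar_separated hyw').2.
Qed.

Lemma border_cond_back y' : separated y' -> lt u y' ->
  exists2 y, separated y /\ le z y & sbisimilar y y'.
Proof.
move=> sy' luy.
have hS2 : sat y' (big_and i0 S2) by case: hu => _ [_]; apply; [exact: luy.1 | exact: hur.2].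
have hncol : ncol z < ncol y'.
  have -> : ncol z = ncol u by apply: eq_card => i; rewrite !inE border_cond_col.
  by apply: ncol_lt luy; exists r.
have [g gL [hy'g hg]] := char_L sy' hncol.
have gS2 : ~ List.In g S2 by move=> h; apply: hy'g; move/sat_big_and: hS2; apply.
have [y1 [sy1 lzy1 hy1g]] : exists y1, [/\ separated y1, lt z y1 & ~ sat y1 g].
  apply: NNPP => hne; apply: gS2; apply/S2_spec; split=> // y1 sy1 lzy1.
  by apply: NNPP => hy1g; apply: hne; exists y1.
have [y hy1y hy] := hg y1 hy1g.
exists y; last exact: sbisimilar_sym.
by split; [exact: (sbisimilar_separated hy).2 | exact: le_trans lzy1.1 hy1y].
Qed.

End BorderPoint.

Lemma char_formP : characteristic (char_form c S1 S2) z.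
Proof.
split; first exact: char_form_unsat.
move=> w /char_form_refuted [r [u [hwu hur hu]]]; exists u => //.
apply: sbisimilar_intro => //; first by exists r.
- exact: border_cond_col hur hu.
- exact: border_cond_forth hur hu.
- exact: border_cond_back hur hu.
Qed.

End CharacteristicFormula.

Lemma char_formulas_exist n (i0 : 'I_n) (M : model n) (hb : has_borders M) (m : nat) :
  exists L, forall z : M, separated z -> n <= ncol z + m ->
    exists2 g, List.In g L & characteristic g z.
Proof.
elim: m => [|m [L HL]].
  by exists nil => z sz; rewrite addn0 => h; have := ncol_separated sz; rewrite ltnNge h.
exists (char_forms i0 L) => z sz hz.
have [S1 S1L S1_spec] := sublists_select L (fun g => ~ sat z g).
have [S2 S2L S2_spec] := sublists_select L (fun g => forall y, separated y -> lt z y -> sat y g).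
exists (char_form i0 [ffun i => col z i] S1 S2); first exact: in_char_forms.
apply: (char_formP i0 hb S1_spec S2_spec sz) => y sy hzy; apply: HL sy _.
by apply: leq_trans hz _; rewrite addnS -addSn leq_add2r.
Qed.

Section Definability.
Variables (n : nat) (M : model n) (hb : has_borders M) (U : M -> Prop).

Lemma closed_of_definable (phi : aiform n) : (forall x : M, sat x phi <-> U x) ->
  (forall x : M, (forall z, separated z -> le x z -> U z) -> U x) /\
  (forall x : M, separated x -> (exists x', [/\ U x', separated x' & sbisimilar x x']) -> U x).
Proof.
move=> hphi; split=> [x hx|x sx [x' [hUx' sx' [R [hR hxx']]]]]; apply/hphi.
- by apply: (sat_of_separated hb) => w sw hxw; apply/hphi; exact: hx.
- by apply/(sbisimulation_sat hb phi hR hxx'); apply/hphi.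
Qed.

Hypothesis hU : upset U.

Lemma definable_of_closed (i0 : 'I_n) :
  (forall x : M, (forall z, separated z -> le x z -> U z) -> U x) ->
  (forall x : M, separated x -> (exists x', [/\ U x', separated x' & sbisimilar x x']) -> U x) ->
  exists phi : aiform n, forall x : M, sat x phi <-> U x.
Proof.
move=> Usep Ubisim; have [L HL] := char_formulas_exist i0 hb n.
have [S _ S_spec] := sublists_select L (fun g => forall y, separated y -> U y -> sat y g).
exists (big_and i0 S) => x; split=> [hx|hUx]; last first.
  apply/sat_big_and => g /S_spec [_ hg]; apply: (sat_of_separated hb) => w sw hxw.
  by apply: hg sw _; exact: hU hxw hUx.
apply: Usep => z sz hxz; apply: NNPP => hUz.
have [g gL [hzg hg]] := HL z sz (leq_addl _ _).
have [y [sy hUy hyg]] : exists y, [/\ separated y, U y & ~ sat y g].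
  apply: NNPP => hne; apply: hzg; move/sat_big_and: (sat_monotone hxz hx); apply.
  apply/S_spec; split=> // y sy hUy.
  by apply: NNPP => hyg; apply: hne; exists y.
have [y' hyy' hzy'] := hg y hyg.
apply: hUz; apply: Ubisim sz _; exists y'; split=> //; first exact: hU hyy' hUy.
exact: (sbisimilar_separated hzy').2.
Qed.

End Definability.

Theorem theorem3p19 (n : nat) (hn : 1 <= n) (M : model n)
  (hb : has_borders M) (U : M -> Prop) (hU : upset U) :
  let P1 := exists phi : aiform n, forall x : M, sat x phi <-> U x in
  let P2 := forall x : M,
      (forall z : M, separated z -> le x z ->
         exists y : M, [/\ U y, separated y & sbisimilar z y]) -> U x in
  let P3 :=
      (forall x : M, (forall z : M, separated z -> le x z -> U z) -> U x) /\
      (forall x : M, separated x ->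
         (exists x' : M, [/\ U x', separated x' & sbisimilar x x']) -> U x) in
  (P1 <-> P2) /\ (P1 <-> P3).
Proof.
move=> P1 P2 P3.
have h13 : P1 -> P3 by case=> phi /(closed_of_definable hb).
have h31 : P3 -> P1 by case; exact: (definable_of_closed hb hU (Ordinal hn)).
have h23 : P2 -> P3.
  move=> H2; split=> [x hx|x sx [x' [hUx' sx' hxx']]]; apply: H2 => z sz hxz.
  - by exists z; split; [exact: hx | | exact: sbisimilar_refl].
  - have [_ _ _ hf _] := sbisimilar_sbisimulation hxx'.
    have [z' [sz' hxz'] hzz'] := hf z sz hxz.
    by exists z'; split=> //; exact: hU hxz' hUx'.
have h32 : P3 -> P2.
  case=> Usep Ubisim x hx; apply: Usep => z sz hxz.
  by have [y [hUy sy hzy]] := hx z sz hxz; apply: Ubisim sz _; exists y.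
tauto.
Qed.
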